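(* Let $G$ be an extraspecial $p$-group of order $p^{2n+1}$ ($p$ prime, $n\ge1$). Then $$A_G(t)=\frac{1}{p^{2n+1}}\left(\frac{p}{1-p^{2n+1}t}+\frac{p^{2n+1}-p}{1-p^{2n}t}\right).$$
   Context: A finite $p$-group $G$ is extraspecial if $Z(G)=G'$ has order $p$ and $G/Z(G)$ is elementary abelian. For a finite group $G$ and $n\ge0$, let $\alpha_{G,n}$ be the number of orbits of $G$ acting on $G^n$ by simultaneous conjugation, and $A_G(t)=\sum_{n\ge0}\alpha_{G,n}t^n$. *)

From HB Require Import structures.
From mathcomp Require Import all_boot all_order all_algebra all_fingroup all_solvable.
Set Implicit Arguments. Unset Strict Implicit. Unset Printing Implicit Defensive.

Local Open Scope group_scope.

Definition sconj_orbit (gT : finGroupType) (G : {group gT}) (n : nat)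
    (x : {ffun 'I_n -> gT}) : {set {ffun 'I_n -> gT}} :=
  [set [ffun i => x i ^ g] | g in G].

Definition alpha (gT : finGroupType) (G : {group gT}) (n : nat) : nat :=
  #|[set sconj_orbit G x | x in [set x : {ffun 'I_n -> gT} | [forall i, x i \in G]]]|.

From HB Require Import structures.
From mathcomp Require Import all_boot all_order all_algebra all_fingroup all_solvable.
Import GRing.Theory Num.Theory.

(* By Burnside's lemma, alpha_{G,k} |G| is the sum over a in G of the number
   of k-tuples fixed by conjugation by a, i.e. of #|C_G(a)|^k.  In an
   extraspecial group of order p^(2n+1) the p central elements have C_G(a) = G,
   and every other element has a maximal centralizer, of order p^(2n). *)

Section TupleConjugation.
Set Implicit Arguments. Unset Strict Implicit. Unset Printing Implicit Defensive.
Local Open Scope group_scope.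

Variables (gT : finGroupType) (k : nat).

Definition tuple_conj (x : {ffun 'I_k -> gT}) (g : gT) : {ffun 'I_k -> gT} :=
  [ffun i => x i ^ g].

Lemma tuple_conj1 x : tuple_conj x 1 = x.
Proof. by apply/ffunP=> i; rewrite ffunE conjg1. Qed.

Lemma tuple_conjM x a b : tuple_conj x (a * b) = tuple_conj (tuple_conj x a) b.
Proof. by apply/ffunP=> i; rewrite !ffunE conjgM. Qed.

Definition tuple_conj_action := TotalAction tuple_conj1 tuple_conjM.

Variable G : {group gT}.

Let tuples_in := [set x : {ffun 'I_k -> gT} | [forall i, x i \in G]].

Lemma acts_tuple_conj : [acts G, on tuples_in | tuple_conj_action].
Proof.
apply/subsetP=> a Ga; rewrite !inE; apply/subsetP=> x.
by rewrite !inE => /forallP xG; apply/forallP=> i; rewrite ffunE groupJ.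
Qed.

Lemma afix_tuple_conj a :
  tuples_in :&: 'Fix_tuple_conj_action[a] = [set x in ffun_on 'C_G[a]].
Proof.
apply/setP=> x; rewrite in_setI [x \in tuples_in]inE [RHS]inE.
apply/andP/ffun_onP => [[/forallP xG fix_x] i | xC].
  rewrite inE xG; apply/cent1P/commgP/conjg_fixP.
  by move/afix1P/ffunP/(_ i): fix_x; rewrite ffunE.
split; first by apply/forallP=> i; have /setIP[] := xC i.
apply/afix1P/ffunP=> i; rewrite ffunE.
by have /setIP[_ /cent1P/commgP/conjg_fixP] := xC i.
Qed.

Lemma alpha_mul_card : (alpha G k * #|G| = \sum_(a in G) #|'C_G[a]| ^ k)%N.
Proof.
rewrite -(Frobenius_Cauchy acts_tuple_conj); apply: eq_bigr => a _.
by rewrite afix_tuple_conj cardsE card_ffun_on card_ord.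
Qed.

End TupleConjugation.

Section Extraspecial.
Set Implicit Arguments. Unset Strict Implicit. Unset Printing Implicit Defensive.
Local Open Scope group_scope.

Variables (gT : finGroupType) (G : {group gT}) (p : nat).
Hypotheses (pG : p.-group G) (esG : extraspecial G).

Lemma card_cent1_extraspecial_center a : a \in 'Z(G) -> #|'C_G[a]| = #|G|.
Proof.
move=> Za; rewrite (setIidPl _) //.
by rewrite -cent_set1 centsC sub1set; case/setIP: Za.
Qed.

Lemma card_cent1_extraspecial a :
  a \in G :\: 'Z(G) -> (#|'C_G[a]| * p = #|G|)%N.
Proof.
case/setDP=> Ga nZa.
rewrite -(p_maximal_index pG (cent1_extraspecial_maximal esG Ga nZa)).
by rewrite Lagrange ?subsetIl.
Qed.

Lemma sum_card_cent1_extraspecial k :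
  (\sum_(a in G) #|'C_G[a]| ^ k
     = p * #|G| ^ k + (#|G| - p) * (#|G| %/ p) ^ k)%N.
Proof.
have p_gt0 : (0 < p)%N := prime_gt0 (extraspecial_prime pG esG).
have oZ : #|'Z(G)| = p := card_center_extraspecial pG esG.
rewrite (big_setID 'Z(G)) /= (setIidPr (center_sub G)).
rewrite (eq_bigr (fun _ => #|G| ^ k)%N); last first.
  by move=> a /card_cent1_extraspecial_center->.
rewrite [X in _ + X](eq_bigr (fun _ => (#|G| %/ p) ^ k)%N); last first.
  by move=> a /card_cent1_extraspecial <-; rewrite mulnK.
by rewrite !sum_nat_const cardsD (setIidPr (center_sub G)) !oZ.
Qed.

End Extraspecial.

Theorem lemma7p7 (gT : finGroupType) (G : {group gT}) (p n : nat) :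
  prime p -> (p.-group G)%g -> extraspecial G -> #|G| = (p ^ (2 * n + 1))%N -> (1 <= n)%N ->
  forall k : nat,
    (((alpha G k)%:R : rat) =
      (p%:R * (p ^ (2 * n + 1))%:R ^+ k
       + ((p ^ (2 * n + 1))%:R - p%:R) * (p ^ (2 * n))%:R ^+ k)
      / (p ^ (2 * n + 1))%:R)%R.
Proof.
move=> pr_p pG esG oG _ k.
have p_gt0 := prime_gt0 pr_p.
have p_le_oG : (p <= p ^ (2 * n + 1))%N by rewrite -{1}(expn1 p) leq_pexp2l ?addn1.
have G_div_p : (#|G| %/ p = p ^ (2 * n))%N by rewrite oG addn1 expnSr mulnK.
have := alpha_mul_card k G; rewrite (sum_card_cent1_extraspecial pG esG) G_div_p oG.
move=> alpha_eq; rewrite -!natrX -natrB // -!natrM -natrD -alpha_eq natrM.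
by rewrite mulfK // pnatr_eq0 -lt0n expn_gt0 p_gt0.
Qed.
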